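(* For a $d$-dimensional state ensemble $\Omega=\{(p_j,\rho_j)\}_{j=0}^{k-1}$, the optimal discrimination probability via DIO, $\widetilde{P}_{\mathrm{suc,DIO}}(\Omega)$, cannot be improved with the assistance of any coherent state, i.e. discriminating $\{(p_j,\rho_j\otimes\tau)\}_j$ via DIO for any ancillary state $\tau$ gives no higher success probability.
   Context: Let $\Delta(\rho)=\sum_i |i\rangle\langle i|\rho|i\rangle\langle i|$ be the completely dephasing channel in the computational basis. DIO (dephasing-covariant incoherent operations) are channels $\mathcal{E}$ with $\Delta\circ\mathcal{E}=\mathcal{E}\circ\Delta$. Quantum state discrimination via free operations $\mathcal{O}$: $\widetilde{P}_{\mathrm{suc},\mathcal{O}}(\Omega)=\sup\sum_j p_j\mathrm{tr}[\mathcal{N}_{A\to BA'}(\rho_j)(|j\rangle\langle j|_B\otimes I_{A'})]$ over $\mathcal{N}_{A\to BA'}\in\mathcal{O}$, $\dim B=k$, $A'\cong A$. *)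

From mathcomp Require Import all_boot all_algebra.
From mathcomp Require Import complex.
From mathcomp Require Import all_classical all_reals ereal.
Set Implicit Arguments. Unset Strict Implicit. Unset Printing Implicit Defensive.
Import GRing.Theory Num.Theory.
Local Open Scope ring_scope.

Section QInfo.
Variable R : realType.
Local Notation C := R[i].

(* Bipartite index k : 'I_(m*n) <-> pair (i,j) : 'I_m * 'I_n, lexicographic
   order (i major), the same identification as mathcomp's mxvec_index. *)
Definition pidx (m n : nat) (k : 'I_(m * n)) : 'I_m * 'I_n :=
  enum_val (cast_ord (esym (mxvec_cast m n)) k).

Definition kron (m1 n1 m2 n2 : nat) (A : 'M[C]_(m1, n1)) (B : 'M[C]_(m2, n2))
  : 'M[C]_(m1 * m2, n1 * n2) :=
  \matrix_(p, q) (A (pidx p).1 (pidx q).1 * B (pidx p).2 (pidx q).2).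

Definition adj_mx (m n : nat) (A : 'M[C]_(m, n)) : 'M[C]_(n, m) :=
  map_mx Num.conj A^T.

(* positive semidefinite (over C, 0 <= z means z is real and nonnegative) *)
Definition psd (n : nat) (A : 'M[C]_n) : Prop :=
  forall v : 'cV[C]_n, 0 <= (adj_mx v *m A *m v) 0 0.

Definition density (n : nat) (rho : 'M[C]_n) : Prop :=
  psd rho /\ \tr rho = 1.

(* id_r (x) E  acting on 'M_(r*n) blockwise *)
Definition ampl (r n m : nat) (E : 'M[C]_n -> 'M[C]_m) (X : 'M[C]_(r * n))
  : 'M[C]_(r * m) :=
  \matrix_(p, q)
    (E (\matrix_(a, b) X (mxvec_index (pidx p).1 a) (mxvec_index (pidx q).1 b)))
      (pidx p).2 (pidx q).2.

Definition is_channel (n m : nat) (E : 'M[C]_n -> 'M[C]_m) : Prop :=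
  [/\ forall (a : C) (X Y : 'M[C]_n), E (a *: X + Y) = a *: E X + E Y,
      forall (r : nat) (X : 'M[C]_(r * n)), psd X -> psd (ampl E X)
    & forall X : 'M[C]_n, \tr (E X) = \tr X].

Definition dephase (n : nat) (X : 'M[C]_n) : 'M[C]_n :=
  \matrix_(i, j) (if i == j then X i i else 0).

Definition DIO (n m : nat) (E : 'M[C]_n -> 'M[C]_m) : Prop :=
  is_channel E /\ forall X : 'M[C]_n, dephase (E X) = E (dephase X).

Definition ensemble (k d : nat) (p : 'I_k -> R) (rho : 'I_k -> 'M[C]_d) : Prop :=
  [/\ forall j, 0 <= p j, \sum_(j < k) p j = 1 & forall j, density (rho j)].

(* success probability of discrimination with N : A -> B A', dim B = k, A' ~ A *)
Definition succ (k d : nat) (p : 'I_k -> R) (rho : 'I_k -> 'M[C]_d)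
  (N : 'M[C]_d -> 'M[C]_(k * d)) : R :=
  complex.Re (\sum_(j < k) ((p j)%:C)%C *
     \tr (N (rho j) *m kron (delta_mx j j : 'M[C]_k) (1%:M : 'M[C]_d))).

Definition Psuc_DIO (k d : nat) (p : 'I_k -> R) (rho : 'I_k -> 'M[C]_d) : \bar R :=
  ereal_sup [set ((succ p rho N)%:E) | N in [set N | DIO N]]%classic.

End QInfo.

From mathcomp Require Import all_boot all_algebra.
From mathcomp Require Import complex.
From mathcomp Require Import all_classical all_reals ereal.
Import GRing.Theory Num.Theory.
Local Open Scope ring_scope.
Set Implicit Arguments. Unset Strict Implicit. Unset Printing Implicit Defensive.

(* Any DIO channel M used on the ensemble {rho_j (x) tau} is simulated, without the
   ancilla, by the channel that appends the diagonal state dephase(tau), applies M,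
   measures the guess register (keeping only the traces of its diagonal blocks), and
   prepares the maximally mixed state on A'.  Each of these four maps is DIO, hence so
   is the composite.  The success probability only sees the block traces of the
   output, which are invariant under dephasing the output; since M commutes with
   dephasing, inputs rho_j (x) tau and rho_j (x) dephase(tau) give the same block
   traces. *)

Section BipartiteIndex.
Variables (V : nmodType) (m n : nat).

Lemma pidx_mxvec (i : 'I_m) (j : 'I_n) : pidx (mxvec_index i j) = (i, j).
Proof. by rewrite /pidx /mxvec_index cast_ordK enum_rankK. Qed.

Lemma mxvec_pidx (p : 'I_(m * n)) : mxvec_index (pidx p).1 (pidx p).2 = p.
Proof. by rewrite /mxvec_index -surjective_pairing /pidx enum_valK cast_ordKV. Qed.

Lemma eq_pidx (p q : 'I_(m * n)) :
  (p == q) = ((pidx p).1 == (pidx q).1) && ((pidx p).2 == (pidx q).2).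
Proof.
have pidxK : cancel (@pidx m n) (fun ij => mxvec_index ij.1 ij.2) := mxvec_pidx.
by rewrite -(inj_eq (can_inj pidxK)).
Qed.

Lemma big_pidx (F : 'I_(m * n) -> V) :
  \sum_p F p = \sum_(i < m) \sum_(j < n) F (mxvec_index i j).
Proof.
rewrite pair_bigA (reindex (fun ij : 'I_m * 'I_n => mxvec_index ij.1 ij.2)) //=.
by exists (@pidx m n) => [[i j] _|p _]; rewrite ?pidx_mxvec ?mxvec_pidx.
Qed.

End BipartiteIndex.

Lemma big_pidx2 (V : nmodType) m n m' n' (F : 'I_(m * n) -> 'I_(m' * n') -> V) :
  \sum_p \sum_q F p q = \sum_(i < m) \sum_(j < n) \sum_(i' < m') \sum_(j' < n')
     F (mxvec_index i j) (mxvec_index i' j').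
Proof.
by rewrite big_pidx; apply: eq_bigr => i _; apply: eq_bigr => j _; rewrite big_pidx.
Qed.

Lemma sum_mulrn_eq (V : nmodType) (I : finType) (i : I) (F : I -> V) :
  \sum_j F j *+ (i == j) = F i.
Proof.
rewrite (bigD1 i) //= eqxx big1 ?addr0 // => j.
by rewrite eq_sym => /negbTE ->.
Qed.

Section DephasingAndPositivity.
Variable R : realType.
Local Notation C := R[i].

Lemma dephaseE n (X : 'M[C]_n) i j : dephase X i j = X i i *+ (i == j).
Proof. by rewrite mxE; case: eqP. Qed.

Lemma dephaseK n (X : 'M[C]_n) : dephase (dephase X) = dephase X.
Proof. by apply/matrixP => i j; rewrite !dephaseE eqxx; case: eqP. Qed.

Lemma mxtrace_dephase n (X : 'M[C]_n) : \tr (dephase X) = \tr X.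
Proof. by apply: eq_bigr => i _; rewrite dephaseE eqxx. Qed.

Lemma dephase_diag_mx n (D : 'rV[C]_n) : dephase (diag_mx D) = diag_mx D.
Proof. by apply/matrixP => i j; rewrite dephaseE !mxE eqxx; case: eqP => [->|]. Qed.

Lemma adj_mxM m n p (A : 'M[C]_(m, n)) (B : 'M[C]_(n, p)) :
  adj_mx (A *m B) = adj_mx B *m adj_mx A.
Proof. by rewrite /adj_mx trmx_mul map_mxM. Qed.

Lemma psd_form n (A : 'M[C]_n) :
  psd A <-> forall v : 'cV[C]_n, 0 <= \sum_p \sum_q (v p 0)^* * A p q * v q 0.
Proof.
have E v : (adj_mx v *m A *m v) 0 0 = \sum_p \sum_q (v p 0)^* * A p q * v q 0.
  rewrite mxE exchange_big; apply: eq_bigr => q _; rewrite mxE mulr_suml.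
  by apply: eq_bigr => p _; rewrite !mxE.
by split=> psdA v; [rewrite -E | rewrite E].
Qed.

Lemma psd_congr m n (P : 'M[C]_(m, n)) (A : 'M[C]_m) :
  psd A -> psd (adj_mx P *m A *m P).
Proof. by move=> psdA v; rewrite -!mulmxA mulmxA -adj_mxM mulmxA; apply: psdA. Qed.

Lemma psd_mxsub m n (f : 'I_n -> 'I_m) (A : 'M[C]_m) :
  psd A -> psd (mxsub f f A).
Proof.
have adj_colsub : adj_mx (colsub f 1%:M : 'M[C]_(m, n)) = rowsub f 1%:M.
  by rewrite /adj_mx trmx_mxsub trmx1 map_mxsub map_mx1.
move=> /(psd_congr (colsub f 1%:M)); rewrite adj_colsub.
by rewrite mul_rowsub_mx mul1mx mulmx_colsub mulmx1 -mxsubcr.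
Qed.

Lemma psd_diag n (A : 'M[C]_n) i : psd A -> 0 <= A i i.
Proof.
move=> /(psd_mxsub (fun _ : 'I_1 => i)) /(_ 1%:M).
by rewrite /adj_mx trmx1 map_mx1 mul1mx mulmx1 mxE.
Qed.

Lemma psd0 n : psd (0 : 'M[C]_n).
Proof. by move=> v; rewrite mulmx0 mul0mx mxE. Qed.

Lemma psdD n (A B : 'M[C]_n) : psd A -> psd B -> psd (A + B).
Proof. by move=> psdA psdB v; rewrite mulmxDr mulmxDl mxE addr_ge0. Qed.

Lemma psd_sum (I : finType) (P : pred I) n (F : I -> 'M[C]_n) :
  (forall i, P i -> psd (F i)) -> psd (\sum_(i | P i) F i).
Proof. by move=> psdF; apply: big_ind => //; [exact: psd0 | exact: psdD]. Qed.

Lemma psd_diagonal n (S : 'M[C]_n) :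
  dephase S = S -> (forall i, 0 <= S i i) -> psd S.
Proof.
move=> diagS S_ge0; apply/psd_form => v; apply: sumr_ge0 => p _.
rewrite (eq_bigr (fun q => ((v p 0)^* * S p p * v q 0) *+ (p == q))).
  by rewrite sum_mulrn_eq mulrAC mulr_ge0 // mulrC mul_conjC_ge0.
by move=> q _; rewrite -{1}diagS dephaseE mulrnAr mulrnAl.
Qed.

End DephasingAndPositivity.

Section TensorBlocks.
Variable R : realType.
Local Notation C := R[i].

Lemma kronE m1 n1 m2 n2 (A : 'M[C]_(m1, n1)) (B : 'M[C]_(m2, n2)) p q :
  kron A B p q = A (pidx p).1 (pidx q).1 * B (pidx p).2 (pidx q).2.
Proof. by rewrite mxE. Qed.

Lemma kron_linearl m1 n1 m2 n2 a (A B : 'M[C]_(m1, n1)) (S : 'M[C]_(m2, n2)) :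
  kron (a *: A + B) S = a *: kron A S + kron B S.
Proof. by apply/matrixP => p q; rewrite !mxE mulrDl mulrA. Qed.

Lemma mxtrace_kron m n (A : 'M[C]_m) (B : 'M[C]_n) : \tr (kron A B) = \tr A * \tr B.
Proof.
rewrite /mxtrace big_pidx mulr_suml; apply: eq_bigr => i _.
by rewrite mulr_sumr; apply: eq_bigr => j _; rewrite kronE pidx_mxvec.
Qed.

Lemma dephase_kron m n (A : 'M[C]_m) (B : 'M[C]_n) :
  dephase (kron A B) = kron (dephase A) (dephase B).
Proof.
apply/matrixP => p q; rewrite !kronE !dephaseE kronE eq_pidx.
by case: eqP => [->|_]; case: eqP => [->|_]; rewrite ?mulr0n ?mulr1n ?mul0r ?mulr0.
Qed.

Lemma dephase_scalar n (a : C) : dephase (a%:M : 'M_n) = a%:M.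
Proof. by rewrite -diag_const_mx dephase_diag_mx. Qed.

Definition mxblk r n s l (X : 'M[C]_(r * n, s * l)) (a : 'I_r) (b : 'I_s) :
    'M[C]_(n, l) :=
  \matrix_(x, y) X (mxvec_index a x) (mxvec_index b y).

Definition block_trace r n (a : 'I_r) (X : 'M[C]_(r * n)) : C := \tr (mxblk X a a).

Lemma mxblk_kron m1 n1 m2 n2 (A : 'M[C]_(m1, n1)) (B : 'M[C]_(m2, n2)) a b :
  mxblk (kron A B) a b = A a b *: B.
Proof. by apply/matrixP => x y; rewrite !mxE !pidx_mxvec. Qed.

Lemma block_trace_kron m n (A : 'M[C]_m) (B : 'M[C]_n) a :
  block_trace a (kron A B) = A a a * \tr B.
Proof. by rewrite /block_trace mxblk_kron mxtraceZ. Qed.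

Lemma block_traceP r n a c (X Y : 'M[C]_(r * n)) :
  block_trace a (c *: X + Y) = c * block_trace a X + block_trace a Y.
Proof.
rewrite /block_trace -mxtraceZ -mxtraceD; congr mxtrace.
by apply/matrixP => x y; rewrite !mxE.
Qed.

Lemma block_trace_dephase r n a (X : 'M[C]_(r * n)) :
  block_trace a (dephase X) = block_trace a X.
Proof. by apply: eq_bigr => x _; rewrite !mxE eqxx. Qed.

Lemma sum_block_trace r n (X : 'M[C]_(r * n)) : \sum_a block_trace a X = \tr X.
Proof.
rewrite /mxtrace big_pidx; apply: eq_bigr => a _.
by apply: eq_bigr => x _; rewrite mxE.
Qed.

Lemma mxtrace_mul_kron_delta k n j (A : 'M[C]_(k * n)) :
  \tr (A *m kron (delta_mx j j : 'M_k) (1%:M : 'M_n)) = block_trace j A.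
Proof.
have -> : kron (delta_mx j j : 'M[C]_k) (1%:M : 'M[C]_n) =
    diag_mx (\row_p ((pidx p).1 == j)%:R).
  apply/matrixP => p q; rewrite !mxE eq_pidx.
  case: (pidx p) (pidx q) => [p1 p2] [q1 q2] /=.
  have [->|_] := eqVneq p1 j; last by rewrite mul0r mul0rn.
  have [_|_] := eqVneq q1 j; first by rewrite mul1r.
  by rewrite mul0r.
rewrite mul_mx_diag /mxtrace big_pidx (bigD1 j) //= [X in _ + X]big1 ?addr0.
  by apply: eq_bigr => x _; rewrite !mxE pidx_mxvec eqxx mulr1.
by move=> i ne; apply: big1 => x _; rewrite !mxE pidx_mxvec (negbTE ne) mulr0.
Qed.

Lemma psd_block_trace_compression r k m (Y : 'M[C]_(r * (k * m))) j :
  psd Y -> psd (\matrix_(a, b) block_trace j (mxblk Y a b)).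
Proof.
have -> : \matrix_(a, b) block_trace j (mxblk Y a b) =
    \sum_x mxsub (fun a => mxvec_index a (mxvec_index j x))
                 (fun a => mxvec_index a (mxvec_index j x)) Y.
  by apply/matrixP => a b; rewrite summxE mxE; apply: eq_bigr => x _; rewrite !mxE.
by move=> psdY; apply: psd_sum => x _; apply: psd_mxsub.
Qed.

(* Diagonality of S spares us the spectral theorem needed for general tensor products. *)
Lemma psd_kron_diagonal m n (A : 'M[C]_m) (S : 'M[C]_n) :
  psd A -> psd S -> dephase S = S -> psd (kron A S).
Proof.
move=> psdA psdS diagS; apply/psd_form => v.
pose w s : 'cV[C]_m := \col_p v (mxvec_index p s) 0.
have -> : \sum_P \sum_Q (v P 0)^* * kron A S P Q * v Q 0 =
    \sum_s S s s * \sum_p \sum_q (w s p 0)^* * A p q * w s q 0.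
  rewrite big_pidx2 exchange_big; apply: eq_bigr => s _.
  rewrite mulr_sumr; apply: eq_bigr => p _; rewrite mulr_sumr; apply: eq_bigr => q _.
  rewrite (eq_bigr (fun s' => (S s s * ((v (mxvec_index p s) 0)^* * A p q *
                                v (mxvec_index q s') 0)) *+ (s == s'))).
    by rewrite sum_mulrn_eq !mxE.
  move=> s' _; rewrite kronE !pidx_mxvec -{1}diagS dephaseE.
  by rewrite /= !mulrnAr mulrnAl mulrA mulrAC mulrC.
apply: sumr_ge0 => s _; apply: mulr_ge0; first exact: psd_diag.
exact: (psd_form A).1.
Qed.

End TensorBlocks.

Section Channels.
Variable R : realType.
Local Notation C := R[i].

Lemma amplE r n m (E : 'M[C]_n -> 'M[C]_m) (X : 'M[C]_(r * n)) p q :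
  ampl E X p q = E (mxblk X (pidx p).1 (pidx q).1) (pidx p).2 (pidx q).2.
Proof. by rewrite mxE. Qed.

Lemma mxblk_ampl r n m (E : 'M[C]_n -> 'M[C]_m) (X : 'M[C]_(r * n)) a b :
  mxblk (ampl E X) a b = E (mxblk X a b).
Proof. by apply/matrixP => x y; rewrite mxE amplE !pidx_mxvec. Qed.

Lemma ampl_comp r n m l (E : 'M[C]_m -> 'M[C]_l) (F : 'M[C]_n -> 'M[C]_m)
    (X : 'M[C]_(r * n)) :
  ampl (E \o F) X = ampl E (ampl F X).
Proof. by apply/matrixP => p q; rewrite !amplE mxblk_ampl. Qed.

Lemma is_channel_comp n m l (E : 'M[C]_m -> 'M[C]_l) (F : 'M[C]_n -> 'M[C]_m) :
  is_channel E -> is_channel F -> is_channel (E \o F).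
Proof.
case=> linE cpE tpE [linF cpF tpF]; split => [a X Y | r X psdX | X] /=.
- by rewrite linF linE.
- by rewrite ampl_comp; apply/cpE/cpF.
- by rewrite tpE tpF.
Qed.

Lemma DIO_comp n m l (E : 'M[C]_m -> 'M[C]_l) (F : 'M[C]_n -> 'M[C]_m) :
  DIO E -> DIO F -> DIO (E \o F).
Proof.
case=> chE covE [chF covF]; split; first exact: is_channel_comp.
by move=> X /=; rewrite covE covF.
Qed.

Lemma DIO_block_trace_dephase n k m (E : 'M[C]_n -> 'M[C]_(k * m)) j X :
  DIO E -> block_trace j (E (dephase X)) = block_trace j (E X).
Proof. by case=> _ covE; rewrite -covE block_trace_dephase. Qed.

Lemma DIO_kron_diagonal n t (S : 'M[C]_t) :
  density S -> dephase S = S -> DIO (fun X : 'M[C]_n => kron X S).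
Proof.
move=> [psdS trS] diagS; split; first split.
- by move=> a X Y; rewrite kron_linearl.
- move=> r X psdX.
  pose f (P : 'I_(r * (n * t))) : 'I_((r * n) * t) :=
    mxvec_index (mxvec_index (pidx P).1 (pidx (pidx P).2).1) (pidx (pidx P).2).2.
  have -> : ampl (fun X => kron X S) X = mxsub f f (kron X S).
    by apply/matrixP => P Q; rewrite amplE !mxE !pidx_mxvec.
  exact/psd_mxsub/psd_kron_diagonal.
- by move=> X; rewrite mxtrace_kron trS mulr1.
- by move=> X; rewrite dephase_kron diagS.
Qed.

Definition block_measure k m (Y : 'M[C]_(k * m)) : 'M[C]_k :=
  diag_mx (\row_j block_trace j Y).

Lemma psd_ampl_block_measure r k m (Y : 'M[C]_(r * (k * m))) :
  psd Y -> psd (ampl (@block_measure k m) Y).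
Proof.
move=> psdY; apply/psd_form => v; rewrite big_pidx2.
pose Z j := \matrix_(a, b) block_trace j (mxblk Y a b).
pose w j : 'cV[C]_r := \col_a v (mxvec_index a j) 0.
have -> : \sum_a \sum_j \sum_b \sum_j'
    (v (mxvec_index a j) 0)^* * ampl (@block_measure k m) Y (mxvec_index a j)
      (mxvec_index b j') * v (mxvec_index b j') 0 =
    \sum_j \sum_a \sum_b (w j a 0)^* * Z j a b * w j b 0.
  rewrite exchange_big; apply: eq_bigr => j _; apply: eq_bigr => a _.
  apply: eq_bigr => b _.
  rewrite (eq_bigr (fun j' => ((v (mxvec_index a j) 0)^* * block_trace j (mxblk Y a b)
                               * v (mxvec_index b j') 0) *+ (j == j'))).
    by rewrite sum_mulrn_eq !mxE.
  move=> j' _; rewrite amplE !pidx_mxvec /block_measure !mxE.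
  by rewrite mulrnAr mulrnAl.
apply: sumr_ge0 => j _.
exact: (psd_form _).1 (psd_block_trace_compression j psdY) (w j).
Qed.

Lemma DIO_block_measure k m : DIO (@block_measure k m).
Proof.
split; first split.
- move=> a X Y; apply/matrixP => i j.
  by rewrite !mxE block_traceP mulrnDl mulrnAr.
- by move=> r Y; apply: psd_ampl_block_measure.
- by move=> X; rewrite mxtrace_diag -sum_block_trace; apply: eq_bigr => j _; rewrite mxE.
- move=> X; rewrite dephase_diag_mx; congr diag_mx.
  by apply/rowP => j; rewrite !mxE block_trace_dephase.
Qed.

Lemma density_dephase n (tau : 'M[C]_n) : density tau -> density (dephase tau).
Proof.
case=> psd_tau tr_tau; split; last by rewrite mxtrace_dephase.
apply: psd_diagonal => [|i]; first exact: dephaseK.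
by rewrite dephaseE eqxx; apply: psd_diag.
Qed.

Lemma density_maximally_mixed n : (0 < n)%N -> density (n%:R^-1%:M : 'M[C]_n).
Proof.
move=> n_gt0; split; last first.
  by rewrite mxtrace_scalar -[LHS]mulr_natr mulVf // pnatr_eq0 -lt0n.
apply: psd_diagonal => [|i]; first exact: dephase_scalar.
by rewrite mxE eqxx mulr1n invr_ge0 ler0n.
Qed.

End Channels.

Section AncillaAbsorption.
Variable R : realType.
Local Notation C := R[i].
Variables (k d t : nat) (tau : 'M[C]_t).
Hypotheses (density_tau : density tau) (d_gt0 : (0 < d)%N).

Definition absorb_ancilla (M : 'M[C]_(d * t) -> 'M[C]_(k * (d * t))) :
    'M[C]_d -> 'M[C]_(k * d) :=
  (fun Y => kron Y (d%:R^-1%:M : 'M[C]_d)) \o @block_measure _ k (d * t) \o M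
  \o (fun X => kron X (dephase tau)).

Lemma DIO_absorb_ancilla M : DIO M -> DIO (absorb_ancilla M).
Proof.
move=> DIO_M; apply: DIO_comp; last first.
  by apply: DIO_kron_diagonal; [exact: density_dephase | exact: dephaseK].
apply: DIO_comp => //; apply: DIO_comp; last exact: DIO_block_measure.
by apply: DIO_kron_diagonal; [exact: density_maximally_mixed | exact: dephase_scalar].
Qed.

Lemma block_trace_absorb_ancilla M j X : DIO M ->
  block_trace j (absorb_ancilla M X) = block_trace j (M (kron X tau)).
Proof.
move=> DIO_M; rewrite /= block_trace_kron (density_maximally_mixed R d_gt0).2 mulr1.
rewrite /block_measure !mxE eqxx mulr1n -DIO_block_trace_dephase //.
by rewrite dephase_kron dephaseK -dephase_kron DIO_block_trace_dephase.
Qed.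

Lemma succ_absorb_ancilla (p : 'I_k -> R) (rho : 'I_k -> 'M[C]_d) M : DIO M ->
  succ p rho (absorb_ancilla M) = succ p (fun j => kron (rho j) tau) M.
Proof.
move=> DIO_M; rewrite /succ; congr complex.Re; apply: eq_bigr => j _.
by rewrite !mxtrace_mul_kron_delta block_trace_absorb_ancilla.
Qed.

End AncillaAbsorption.

Lemma ensemble_dim_gt0 (R : realType) k d (p : 'I_k -> R) (rho : 'I_k -> 'M[R[i]]_d) :
  ensemble p rho -> (0 < d)%N.
Proof.
case: k p rho => [|k] p rho [_ sum_p density_rho].
  by move: sum_p; rewrite big_ord0 => /eqP; rewrite eq_sym oner_eq0.
case: d rho density_rho => // rho /(_ ord0) [_].
by rewrite /mxtrace big_ord0 => /eqP; rewrite eq_sym oner_eq0.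
Qed.

Theorem proposition2 (R : realType) (k d : nat) (p : 'I_k -> R)
  (rho : 'I_k -> 'M[R[i]]_d) (t : nat) (tau : 'M[R[i]]_t) :
  ensemble p rho -> density tau ->
  (Psuc_DIO p (fun j => kron (rho j) tau) <= Psuc_DIO p rho)%E.
Proof.
move=> ens density_tau; have d_gt0 := ensemble_dim_gt0 ens.
apply: ge_ereal_sup => _ [M DIO_M <-].
apply: ereal_sup_ubound; exists (absorb_ancilla tau M); first exact: DIO_absorb_ancilla.
by rewrite succ_absorb_ancilla.
Qed.
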